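(* If $X\subseteq\mathbb{R}^n_\infty$ is compact, then $\mathcal{F}(X)$ is compact.
   Context: $\mathbb{R}^n_\infty$ is $\mathbb{R}^n$ with the $\ell^\infty$-metric. For $1\le i\le n$, $\Lambda_i=\{x:x_i=\|x\|_\infty\}$ and $p+\xi\Lambda_i=\{p+\xi z:z\in\Lambda_i\}$ for $\xi\in\{\pm1\}$. $\mathcal{F}(X)$ is the set of points $p\in\mathbb{R}^n$ such that $(p+\xi\Lambda_i)\cap X\ne\emptyset$ for every $i\in\{1,\dots,n\}$ and $\xi\in\{\pm1\}$. *)

(* R^n_infty is modelled as the row vectors 'rV[R]_n,
   whose canonical normed structure in MathComp-Analysis is the max (l^infty)
   norm `|x| = max_j |x 0 j| (mx_norm), with the induced topology. *)
From HB Require Import structures.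
From mathcomp Require Import all_boot all_order all_algebra.
From mathcomp Require Import all_classical all_reals all_analysis.
Set Implicit Arguments. Unset Strict Implicit. Unset Printing Implicit Defensive.
Import Order.TTheory GRing.Theory Num.Theory.
Import numFieldNormedType.Exports.
Local Open Scope classical_set_scope.
Local Open Scope ring_scope.

Definition Lambda (R : realType) (n : nat) (i : 'I_n) : set 'rV[R]_n :=
  [set x : 'rV[R]_n | x 0 i = `|x|].

Definition cone (R : realType) (n : nat) (p : 'rV[R]_n) (xi : R) (i : 'I_n)
  : set 'rV[R]_n :=
  [set p + xi *: z | z in Lambda i].

Definition Fset (R : realType) (n : nat) (X : set 'rV[R]_n) : set 'rV[R]_n :=
  [set p | forall (i : 'I_n) (xi : R), (xi = 1 \/ xi = -1) ->
      cone p xi i `&` X !=set0].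

Lemma norm_is_mx_norm (R : realType) (n : nat) (x : 'rV[R]_n) :
  `|x| = mx_norm x.
Proof. by []. Qed.

From HB Require Import structures.
From mathcomp Require Import all_boot all_order all_algebra.
From mathcomp Require Import all_classical all_reals all_analysis.
From mathcomp Require Import ring.

Import Order.TTheory GRing.Theory Num.Theory.
Import numFieldNormedType.Exports.
Local Open Scope classical_set_scope.
Local Open Scope ring_scope.

(* A point x lies in the cone p + xi Lambda_i iff g (x - p) = 0 for the
   2-Lipschitz function g v = xi v_i - |v|.  Hence F(X) is closed: if p is a
   limit of points of F(X) but g (. - p) has no zero on the compact set X, then
   |g (. - p)| has a positive minimum on X, and a point q of F(X) close enough
   to p gives some x in X with g (x - q) = 0, so |g (x - p)| is below that
   minimum.  F(X) is bounded by any bound c of X: the cones p + Lambda_j and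
   p - Lambda_j meet X in points x, x' with x'_j <= p_j <= x_j. *)

Section Lipschitz.
Context {R : realType} {V : normedModType R}.

Lemma klipschitz_modulus {W : normedModType R} {k : R} {f : V -> W} :
  k.-lipschitz f -> forall e, 0 < e -> exists2 d, 0 < d &
    forall v w, `|v - w| < d -> `|f v - f w| < e.
Proof.
move=> fk e e0; exists (e / (`|k| + 1)) => [|v w vw]; first by rewrite divr_gt0.
have kvw : k * `|v - w| <= (`|k| + 1) * `|v - w|.
  by rewrite ler_wpM2r // (le_trans (ler_norm k)) // lerDl.
have fvw : `|f v - f w| <= k * `|v - w| := fk (v, w) (conj I I).
have dvw : (`|k| + 1) * `|v - w| < e by rewrite mulrC -ltr_pdivlMr // ltr_wpDl.
exact: le_lt_trans fvw (le_lt_trans kvw dvw).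
Qed.

Lemma klipschitz_continuous {W : normedModType R} {k : R} {f : V -> W} :
  k.-lipschitz f -> continuous f.
Proof.
move=> /klipschitz_modulus fk v; apply/cvgrPdist_lt => e /fk[d d0 fd].
by apply/nbhs_normP; exists d => // w; exact: fd.
Qed.

Lemma closed_shifted_zeros {X : set V} {h : V -> R} {k : R} :
  compact X -> k.-lipschitz h ->
  closed [set p | exists2 x, X x & h (x - p) = 0].
Proof.
move=> cX hk p clp; apply: contrapT => noroot.
have [_ [[x0 X0 _] _]] := clp _ (nbhsx_ballx p 1 ltr01).
have hpc : {within X, continuous (fun x => `|h (x - p)|)}.
  apply: continuous_subspaceT => x; apply: cvg_norm.
  apply: (continuous_comp (f := fun y => y - p)).
    exact: cvgB cvg_id (cvg_cst p).
  exact: (klipschitz_continuous hk (x - p)).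
have [c /set_mem Xc cmin] := compact_EVT_min (ex_intro _ x0 X0) cX hpc.
have m0 : 0 < `|h (c - p)|.
  by rewrite normr_gt0; apply/eqP => hc0; apply: noroot; exists c.
have [d d0 hd] := klipschitz_modulus hk _ m0.
have [q [[x Xx hx0] pq]] := clp _ (nbhsx_ballx p d d0).
have := cmin x (mem_set Xx); apply/negP; rewrite -ltNge.
rewrite -[X in `|X|]subr0 -hx0; apply: hd.
by rewrite opprB addrC addrA subrK distrC; rewrite -ball_normE in pq.
Qed.

End Lipschitz.

Section RowVectors.
Variables (R : realType) (n : nat).
Implicit Types (v p x : 'rV[R]_n) (X : set 'rV[R]_n) (xi c : R) (i j : 'I_n).

Lemma ler_coord_norm v j : `|v 0 j| <= `|v|.
Proof.
rewrite [leRHS]norm_is_mx_norm mx_normrE; apply/bigmax_geP; right => /=.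
by exists (0, j).
Qed.

Lemma row_norm_le v c : 0 <= c -> (forall j, `|v 0 j| <= c) -> `|v| <= c.
Proof.
move=> c0 vc; rewrite [leLHS]norm_is_mx_norm mx_normrE; apply/bigmax_leP.
by split => // -[a j] _ /=; rewrite (ord1 a).
Qed.

Lemma coneP {p x xi i} :
  `|xi| = 1 -> cone p xi i x <-> xi * (x - p) 0 i = `|x - p|.
Proof.
move=> xi1.
have xi2 : xi * xi = 1 by rewrite -expr2 -real_normK ?num_real // xi1 expr1n.
split=> [[z zi <-]|xp].
  by rewrite addrAC subrr add0r mxE mulrA xi2 mul1r normrZ xi1 mul1r zi.
exists (xi *: (x - p)); last by rewrite scalerA xi2 scale1r addrC subrK.
by rewrite /Lambda /= mxE xp normrZ xi1 mul1r.
Qed.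

Lemma cone_coord_le {p x xi i} :
  `|xi| = 1 -> cone p xi i x -> xi * p 0 i <= xi * x 0 i.
Proof.
move=> xi1 /(coneP xi1) xp.
by have := normr_ge0 (x - p); rewrite -xp !mxE mulrBr subr_ge0.
Qed.

Lemma Fset_norm_le X c : 0 <= c -> (forall x, X x -> `|x| <= c) ->
  forall p, Fset X p -> `|p| <= c.
Proof.
move=> c0 Xc p Fp; apply: row_norm_le => // j.
have [x1 [cx1 X1]] := Fp j 1 (or_introl erefl).
have [x2 [cx2 X2]] := Fp j (-1) (or_intror erefl).
have := cone_coord_le (normr1 _) cx1; have := cone_coord_le (normrN1 _) cx2.
rewrite !mulN1r !mul1r lerN2 => x2p px1.
have /andP[x2c _] : - c <= x2 0 j <= c.
  by rewrite -ler_norml (le_trans (ler_coord_norm _ _)) ?Xc.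
have /andP[_ x1c] : - c <= x1 0 j <= c.
  by rewrite -ler_norml (le_trans (ler_coord_norm _ _)) ?Xc.
by rewrite ler_norml (le_trans x2c x2p) (le_trans px1 x1c).
Qed.

Lemma bounded_Fset X : bounded_set X -> bounded_set (Fset X).
Proof.
rewrite /= /bounded_near => bX; near=> c; apply: Fset_norm_le; near: c.
  exact: nbhs_pinfty_ge.
exact: bX.
Unshelve. all: by end_near.
Qed.

Lemma coord_sub_norm_lipschitz xi i : `|xi| = 1 ->
  2.-lipschitz (fun v : 'rV[R]_n => xi * v 0 i - `|v|).
Proof.
move=> xi1 [v w] _ /=.
have -> : xi * v 0 i - `|v| - (xi * w 0 i - `|w|) =
    xi * (v - w) 0 i + (`|w| - `|v|) by rewrite !mxE; ring.
apply: le_trans (ler_normD _ _) _; rewrite mulr2n mulrDl mul1r lerD //.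
  by rewrite normrM xi1 mul1r ler_coord_norm.
by rewrite distrC ler_dist_dist.
Qed.

Lemma closed_cone_meet X xi i : compact X -> `|xi| = 1 ->
  closed [set p | cone p xi i `&` X !=set0].
Proof.
move=> cX xi1.
have -> : [set p | cone p xi i `&` X !=set0] =
    [set p | exists2 x, X x & xi * (x - p) 0 i - `|x - p| = 0].
  apply/seteqP; split => p /= [x].
    by move=> [/(coneP xi1) xp Xx]; exists x => //; rewrite xp subrr.
  by move=> Xx /eqP; rewrite subr_eq0 => /eqP /(coneP xi1) cx; exists x.
exact: closed_shifted_zeros cX (coord_sub_norm_lipschitz xi i xi1).
Qed.

Lemma closed_Fset X : compact X -> closed (Fset X).
Proof.
move=> cX.
have -> : Fset X =
    \bigcap_(ixi in [set ixi : 'I_n * R | ixi.2 = 1 \/ ixi.2 = -1])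
      [set p | cone p ixi.2 ixi.1 `&` X !=set0].
  apply/seteqP; split => p Fp => [[i xi] /= xi1 | i xi xi1]; first exact: Fp.
  exact: Fp (i, xi) xi1.
apply: closed_bigI => -[i xi] /= xi1; apply: closed_cone_meet cX _.
by case: xi1 => ->; rewrite ?normrN normr1.
Qed.

End RowVectors.

Theorem proposition5p7 (R : realType) (n : nat) (X : set 'rV[R]_n) :
  compact X -> compact (Fset X).
Proof.
move=> cX; apply: bounded_closed_compact; last exact: closed_Fset.
exact/bounded_Fset/compact_bounded.
Qed.
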